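(* Let $L$ be a fixed graph and let $n$ be sufficiently large. For every proper edge-colouring $\psi$ of $K_{L,n}$ there is a set $C_\psi\subseteq V(\tilde R)$ with $|C_\psi|=\Omega_L(n)$ which is compatible with $\tilde L$ with respect to $\psi$.
   Context: For vertex-disjoint graphs $L,R$, the join $K_{L,R}$ has vertex set $V(L)\cup V(R)$ and edge set $E(L)\cup E(R)\cup\{uv: u\in V(L), v\in V(R)\}$; $K_{L,n}$ denotes $K_{L,R}$ where $R$ is an edgeless graph on $n$ vertices; $\tilde L,\tilde R$ denote the copies of $L,R$ inside the join. Given a graph $G$, a proper edge-colouring $\psi$ of $G$ and a subgraph $K\subseteq G$, a vertex $x$ in the common neighbourhood of $V(K)$ is of interest to $K$ with respect to $\psi$ if $\psi(E(K))\cap\{\psi(xk):k\in V(K)\}=\emptyset$. A set $X$ of vertices is compatible with $K$ with respect to $\psi$ if every $x\in X$ is of interest to $K$ and the sets $\{\psi(xk):k\in V(K)\}$, $x\in X$, are pairwise disjoint. The implicit constant in $\Omega_L(n)$ depends only on $L$. *)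

From mathcomp Require Import all_boot.
Set Implicit Arguments. Unset Strict Implicit. Unset Printing Implicit Defensive.

Definition simple_graph (T : finType) (e : rel T) : Prop :=
  symmetric e /\ irreflexive e.

(* The join K_{L,n}: vertices VL + 'I_n; L-copy keeps its edges, R-copy is
   edgeless, every L-vertex is adjacent to every R-vertex. *)
Definition joinKn (VL : finType) (eL : rel VL) (n : nat) : rel (VL + 'I_n) :=
  fun x y => match x, y with
             | inl u, inl v => eL u v
             | inl _, inr _ => true
             | inr _, inl _ => true
             | inr _, inr _ => false
             end.

(* An edge-colouring of a graph (T,e): a colour for each (unordered) edge,
   given as a function on pairs that is symmetric on edges; proper means
   distinct edges sharing an endpoint receive distinct colours. *)
Definition proper_edge_colouring (T : finType) (e : rel T) (C : Type)
    (psi : T -> T -> C) : Prop :=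
  (forall x y, e x y -> psi x y = psi y x) /\
  (forall x y z, e x y -> e x z -> y <> z -> psi x y <> psi x z).

Definition in_Ltilde (VL : finType) (n : nat) (x : VL + 'I_n) : bool :=
  if x is inl _ then true else false.

Definition of_interest (T : finType) (e : rel T) (C : Type)
    (psi : T -> T -> C) (K : pred T) (x : T) : Prop :=
  (forall k, K k -> e x k) /\
  (forall u v k, K u -> K v -> e u v -> K k -> psi u v <> psi x k).

Definition compatible (T : finType) (e : rel T) (C : Type)
    (psi : T -> T -> C) (K : pred T) (X : {set T}) : Prop :=
  (forall x, x \in X -> of_interest e psi K x) /\
  (forall x y k k', x \in X -> y \in X -> x <> y -> K k -> K k' ->
      psi x k <> psi y k').

Arguments joinKn {VL} eL n.
Arguments in_Ltilde {VL n} x.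

From mathcomp Require Import all_boot.
From mathcomp Require Import zify.
Set Implicit Arguments. Unset Strict Implicit. Unset Printing Implicit Defensive.

(* Write l = |V(L)|.  In a proper edge-colouring of K_{L,n} the
   colours psi(yk) at a fixed L-vertex k are pairwise distinct over the
   R-vertices y, so every "colour coincidence" between an R-vertex and some
   fixed data determines that R-vertex uniquely.  Two consequences:
   - at most l^3 R-vertices y are "spoiled", i.e. see an L-edge colour on one
     of their edges to tilde L; all other R-vertices are of interest;
   - in the "clash" graph on R (y ~ y' when some colour at y towards tilde L
     reappears at y' towards tilde L) every vertex has degree at most l^2.
   A greedy independent set in the clash graph restricted to the unspoiled
   vertices is then compatible with tilde L and has at least
   (n - l^3) / (l^2 + 1) elements, which is Omega_L(n) once n >= 2 l^3.
   The file first proves the two general counting facts (uniquely owned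
   elements; greedy independent sets), then the colouring-specific lemmas,
   and finally the theorem. *)

Lemma card_owned_le (A B : finType) (owns : B -> A -> bool) :
  (forall b a a', owns b a -> owns b a' -> a = a') ->
  #|[set a | [exists b, owns b a]]| <= #|B|.
Proof.
move=> owns_uniq; set S := [set a | _].
have [->|[a0]] := set_0Vmem S; first by rewrite cards0.
rewrite inE => /existsP [b0 _].
rewrite -(card_in_imset (f := fun a => odflt b0 [pick b | owns b a])).
  exact: max_card.
move=> a a'; rewrite !inE => /existsP [b Hb] /existsP [b' Hb'].
case: pickP => [c Hc|/(_ b)]; last by rewrite Hb.
case: pickP => [c' Hc'|/(_ b')]; last by rewrite Hb'.
by move=> /= Ecc'; subst c'; exact: owns_uniq Hc Hc'.
Qed.

Definition independent (T : finType) (conf : rel T) (X : {set T}) : Prop :=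
  forall x y, x \in X -> y \in X -> x != y -> ~~ conf x y.

Section Greedy.

Variables (T : finType) (conf : rel T) (D : nat).
Hypothesis conf_sym : symmetric conf.
Hypothesis conf_degree : forall x, #|[set y | conf x y]| <= D.

Lemma independentU1 (x : T) (X : {set T}) :
  independent conf X -> (forall y, y \in X -> ~~ conf x y) ->
  independent conf (x |: X).
Proof.
move=> indX nconf a b; rewrite !in_setU1.
case/orP=> [/eqP ->|aX]; case/orP=> [/eqP ->|bX].
- by rewrite eqxx.
- by move=> _; exact: nconf.
- by move=> _; rewrite conf_sym; exact: nconf.
- exact: indX.
Qed.

Lemma greedy_independent_set (S : {set T}) :
  exists2 X : {set T}, X \subset S /\ independent conf X &
    #|S| <= D.+1 * #|X|.
Proof.
have [m] := ubnP #|S|; elim: m S => // m IH S.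
have [-> _|[x xS] leSm] := set_0Vmem S.
  exists set0; last by rewrite cards0.
  by split; [exact: sub0set | move=> ? ?; rewrite inE].
set A := x |: [set y | conf x y].
have cardA : #|A| <= D.+1 by rewrite cardsU1 -add1n leq_add ?leq_b1.
have splitS : #|S :&: A| + #|S :\: A| = #|S| by rewrite cardsID.
have cardSA : #|S :&: A| <= #|A| by rewrite subset_leq_card ?subsetIr.
have SA_gt0 : 0 < #|S :&: A| by apply/card_gt0P; exists x; rewrite !inE xS eqxx.
have [X [subX indX] cardX] := IH (S :\: A) ltac:(lia).
have xX : x \notin X by apply/negP => /(subsetP subX); rewrite !inE eqxx.
exists (x |: X); last by rewrite cardsU1 xX /= mulnS; lia.
split.
  apply/subsetP => y; rewrite in_setU1 => /orP [/eqP ->//|/(subsetP subX)].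
  by rewrite inE => /andP [].
apply: independentU1 => // y /(subsetP subX).
by rewrite !inE negb_or => /andP [/andP [_ ->]].
Qed.

End Greedy.

Section ColouringOfJoin.

Variables (VL : finType) (eL : rel VL) (n : nat) (C : eqType).
Variable psi : VL + 'I_n -> VL + 'I_n -> C.
Hypothesis psi_proper : proper_edge_colouring (joinKn eL n) psi.

Local Notation l := #|VL|.

Lemma colour_at_L_injective (k : VL) (a b : 'I_n) :
  psi (inr a) (inl k) = psi (inr b) (inl k) -> a = b.
Proof.
case: psi_proper => psi_sym psi_distinct E; apply/eqP/negPn/negP => neq_ab.
have eka : joinKn eL n (inl k) (inr a) by [].
have ekb : joinKn eL n (inl k) (inr b) by [].
apply: (psi_distinct _ _ _ eka ekb); first by case=> Eab; rewrite Eab eqxx in neq_ab.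
by rewrite (psi_sym _ _ eka) (psi_sym _ _ ekb).
Qed.

(* a and b clash if some colour between a and tilde L reappears between b
   and tilde L; compatible sets are exactly the clash-free ones. *)
Definition clash (a b : 'I_n) : bool :=
  [exists p : VL * VL, psi (inr a) (inl p.1) == psi (inr b) (inl p.2)].

Lemma clash_sym : symmetric clash.
Proof.
by move=> a b; apply/existsP/existsP => -[[k k'] /eqP E]; exists (k', k); rewrite /= E.
Qed.

Lemma clash_degree (a : 'I_n) : #|[set b | clash a b]| <= l * l.
Proof.
rewrite -card_prod; apply: (card_owned_le (owns := fun p b =>
  psi (inr a) (inl p.1) == psi (inr b) (inl p.2))).
by move=> [k k'] b b' /= /eqP E1 /eqP E2; apply: (colour_at_L_injective (k := k')); rewrite -E1 -E2.
Qed.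

Definition spoiled : {set 'I_n} :=
  [set y | [exists p : VL * VL * VL,
     eL p.1.1 p.1.2 && (psi (inl p.1.1) (inl p.1.2) == psi (inr y) (inl p.2))]].

Lemma card_spoiled : #|spoiled| <= l * l * l.
Proof.
rewrite -!card_prod; apply: (card_owned_le (owns := fun p y =>
  eL p.1.1 p.1.2 && (psi (inl p.1.1) (inl p.1.2) == psi (inr y) (inl p.2)))).
move=> [[u v] k] b b' /= /andP [_ /eqP E1] /andP [_ /eqP E2].
by apply: (colour_at_L_injective (k := k)); rewrite -E1 -E2.
Qed.

Lemma unspoiled_of_interest (y : 'I_n) :
  y \notin spoiled -> of_interest (joinKn eL n) psi in_Ltilde (inr y).
Proof.
move=> ny; split; first by case.
move=> [u|u] [v|v] [k|k] //= _ _ euv _ E.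
by move/negP: ny; apply; rewrite /spoiled inE; apply/existsP; exists (u, v, k); rewrite /= euv E eqxx.
Qed.

Lemma independent_compatible (X : {set 'I_n}) :
  X \subset ~: spoiled -> independent clash X ->
  compatible (joinKn eL n) psi in_Ltilde (inr @: X).
Proof.
move=> subX indX; split.
  move=> x /imsetP [y yX ->]; apply: unspoiled_of_interest.
  by move: (subsetP subX _ yX); rewrite inE.
move=> x y [k|k] [k'|k'] /imsetP [a aX ->] /imsetP [b bX ->] neq //= _ _ E.
have neq_ab : a != b by apply/eqP => Eab; apply: neq; rewrite Eab.
by move/negP: (indX a b aX bX neq_ab); apply; apply/existsP; exists (k, k'); rewrite /= E.
Qed.

End ColouringOfJoin.

Theorem mainTheorem5 (VL : finType) (eL : rel VL) :
  simple_graph eL ->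
  exists (c : nat) (N : nat), 0 < c /\
    forall n : nat, N <= n ->
    forall (C : eqType) (psi : VL + 'I_n -> VL + 'I_n -> C),
      proper_edge_colouring (joinKn eL n) psi ->
      exists X : {set VL + 'I_n},
        (forall x, x \in X -> ~~ in_Ltilde x) /\
        n <= c * #|X| /\
        compatible (joinKn eL n) psi (@in_Ltilde VL n) X.
Proof.
(* The argument does not need L to be simple. *)
move=> _; set l := #|VL|.
exists (2 * (l * l).+1), (2 * (l * l * l)); split=> // n le_Nn C psi proper_psi.
have [X [subX indX] cardX] :=
  greedy_independent_set (@clash_sym _ _ _ psi) (clash_degree proper_psi)
    (~: spoiled eL psi).
have card_unspoiled := cardsC (spoiled eL psi); rewrite card_ord in card_unspoiled.
have card_sp := card_spoiled proper_psi.
exists (inr @: X); split; first by move=> x /imsetP [y _ ->].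
split; last exact: independent_compatible.
rewrite card_imset; last by move=> a b [].
rewrite -/l in cardX card_sp.
(* Since n >= 2 l^3, at least half of the R-vertices are unspoiled. *)
have half_unspoiled : n <= 2 * #|~: spoiled eL psi| by lia.
by rewrite -mulnA (leq_trans half_unspoiled) // leq_mul2l cardX orbT.
Qed.
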